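(* Let $G$ be a finite simple graph, let $P$ be a pebble distribution on $G$, and let $U$ be a unit distribution of nonzero size with all pebbles on a vertex $u$, with $P$ and $U$ disjoint. Then every cooperation vertex (with respect to $P$ and $U$) has a neighbor that has cooperation excess.
   Context: A pebble distribution is a function $V(G)\to\mathbb{Z}_{\geq0}$; $(P+U)(v)=P(v)+U(v)$; disjoint means no vertex has pebbles under both. A pebbling move removes two pebbles from a vertex and adds one to an adjacent vertex. A vertex $v$ is $k$-reachable under $P$ if some executable sequence of pebbling moves yields at least $k$ pebbles on $v$; reachable means $1$-reachable. $\mathrm{reach}(P,v)$ is the largest such $k$; $\mathrm{exc}(P,v)=\mathrm{reach}(P,v)-1$ if $v$ is reachable, else $0$. A cooperation vertex is a vertex reachable under $P+U$ but reachable under neither $P$ nor $U$. The cooperation excess of a vertex $v$ is $\mathrm{exc}(P+U,v)-\mathrm{exc}(P,v)-\mathrm{exc}(U,v)$; $v$ has cooperation excess if this is positive. *)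

From mathcomp Require Import all_boot.
From mathcomp Require Import boolp.
Set Implicit Arguments. Unset Strict Implicit. Unset Printing Implicit Defensive.

Section Pebbling.
Variables (T : finType) (e : rel T).

Definition dist := T -> nat.

Definition dadd (P U : dist) : dist := fun v => P v + U v.

Definition disjoint_dist (P U : dist) : Prop := forall v, P v = 0 \/ U v = 0.

Definition total (P : dist) : nat := \sum_(v : T) P v.

Definition pmove (D D' : dist) : Prop :=
  exists x y, [/\ e x y, 2 <= D x &
    forall z, D' z = if z == x then D x - 2 else if z == y then D y + 1 else D z].

Inductive preach (D : dist) : dist -> Prop :=
| preach_refl : preach D D
| preach_step : forall D1 D2, preach D D1 -> pmove D1 D2 -> preach D D2.

Definition kreachable (P : dist) (v : T) (k : nat) : Prop :=
  exists D, preach P D /\ k <= D v.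

Definition reachable (P : dist) (v : T) : Prop := kreachable P v 1.

Definition reach (P : dist) (v : T) : nat :=
  \max_(k < (total P).+1 | `[< kreachable P v k >]) k.

Definition exc (P : dist) (v : T) : nat :=
  if `[< reachable P v >] then (reach P v).-1 else 0.

Definition cooperation_vertex (P U : dist) (v : T) : Prop :=
  reachable (dadd P U) v /\ ~ reachable P v /\ ~ reachable U v.

(* exc(P+U,v) - exc(P,v) - exc(U,v) > 0, computed in the integers;
   equivalent to the strict inequality below in nat. *)
Definition has_coop_excess (P U : dist) (v : T) : Prop :=
  exc P v + exc U v < exc (dadd P U) v.

End Pebbling.

(* Since neither P nor U reaches v, neither has a pebble on v, so along a move
   sequence from P + U there is a first move that puts a pebble on v; it comes
   from a neighbour w holding two pebbles, whence exc(P + U, w) >= 1.  On the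
   other hand, two pebbles on w under P alone (or U alone) would let v be
   reached, so exc(P, w) = exc(U, w) = 0 and w has cooperation excess. *)
From Pilot Require Import Defs.
From mathcomp Require Import all_boot.
From mathcomp Require Import boolp.
From mathcomp Require Import zify.

Section PebblingFacts.
Set Implicit Arguments. Unset Strict Implicit.
Variables (T : finType) (e : rel T).
Hypothesis e_irr : irreflexive e.

Lemma sum_indicator (x : T) (c : nat) : \sum_(z : T) ((z == x) * c) = c.
Proof. by rewrite (bigD1 x) //= eqxx big1 ?addn0 ?mul1n // => z /negbTE ->. Qed.

Lemma pmove_total_leq D1 D2 : pmove e D1 D2 -> Defs.total D2 <= Defs.total D1.
Proof.
case=> x [y [exy Dx D2E]].
have neq_xy : x != y by apply: contraTneq exy => ->; rewrite e_irr.
have balance z : D2 z + (z == x) * 2 = D1 z + (z == y) * 1.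
  rewrite D2E; case: (eqVneq z x) => [->|_]; first by rewrite (negbTE neq_xy); lia.
  by case: (eqVneq z y) => [->|_] /=; lia.
have : \sum_z (D2 z + (z == x) * 2) = \sum_z (D1 z + (z == y) * 1).
  by apply: eq_bigr => z _; apply: balance.
by rewrite !big_split /= !sum_indicator /Defs.total; lia.
Qed.

Lemma preach_total_leq P D : preach e P D -> Defs.total D <= Defs.total P.
Proof. by elim=> // D1 D2 _ IH /pmove_total_leq/leq_trans; apply. Qed.

Lemma dist_leq_total (D : dist T) v : D v <= Defs.total D.
Proof. by rewrite /Defs.total (bigD1 v) //= leq_addr. Qed.

Lemma kreachable_leq_total P v k : kreachable e P v k -> k <= Defs.total P.
Proof.
case=> D [PD kD]; apply: leq_trans kD _.
exact: leq_trans (dist_leq_total D v) (preach_total_leq PD).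
Qed.

Lemma unreachable_empty P v : ~ reachable e P v -> P v = 0.
Proof.
move=> unreach; apply/eqP; rewrite -leqn0 leqNgt; apply/negP => Pv.
by apply: unreach; exists P; split => //; apply: preach_refl.
Qed.

Lemma kreachable2_adj_reachable P w v :
  e w v -> kreachable e P w 2 -> reachable e P v.
Proof.
move=> ewv [D [PD Dw]].
have neq_wv : w != v by apply: contraTneq ewv => ->; rewrite e_irr.
exists (fun z => if z == w then D w - 2 else if z == v then D v + 1 else D z).
split; last by rewrite eq_sym (negbTE neq_wv) eqxx addn1.
by apply: preach_step PD _; exists w, v.
Qed.

Lemma reachable_from_empty P D v : P v = 0 -> preach e P D -> 0 < D v ->
  exists2 w, e w v & kreachable e P w 2.
Proof.
move=> Pv0; elim=> [|D1 D2 PD1 IH [x [y [exy Dx D2E]]]]; first by rewrite Pv0.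
have [D1v0|/IH //] := posnP (D1 v).
rewrite D2E; case: (eqVneq v x) => [vx|_] D2v; first by rewrite -vx D1v0 in D2v.
case: (eqVneq v y) D2v => [vy|_] D2v; last by rewrite D1v0 in D2v.
by exists x; [rewrite vy | exists D1].
Qed.

Lemma leq_reach P v k : kreachable e P v k -> k <= reach e P v.
Proof.
move=> Pvk.
have kP : k < (Defs.total P).+1 by rewrite ltnS (kreachable_leq_total Pvk).
by apply: (leq_bigmax_cond (Ordinal kP)); apply/asboolP.
Qed.

Lemma exc_gt0 P v : kreachable e P v 2 -> 0 < exc e P v.
Proof.
move=> Pv2; rewrite /exc; case: asboolP => [_|unreach].
  by have := leq_reach Pv2; case: (reach e P v) => [|[|]].
by case: Pv2 => D [PD Dv]; case: unreach; exists D; split => //; apply: leq_trans Dv.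
Qed.

Lemma exc_eq0 P v : ~ kreachable e P v 2 -> exc e P v = 0.
Proof.
move=> not2; rewrite /exc; case: asboolP => // _.
suff : reach e P v <= 1 by case: (reach e P v) => [|[|]].
apply/bigmax_leqP => k /asboolP Pvk; rewrite leqNgt; apply/negP => k2.
by apply: not2; case: Pvk => D [PD Dv]; exists D; split => //; apply: leq_trans Dv.
Qed.

Lemma exc_adj_unreachable P w v : e w v -> ~ reachable e P v -> exc e P w = 0.
Proof. by move=> ewv unreach; apply: exc_eq0 => /(kreachable2_adj_reachable ewv). Qed.

End PebblingFacts.

Theorem claim3p4 (T : finType) (e : rel T)
  (e_sym : symmetric e) (e_irr : irreflexive e)
  (P : T -> nat) (u : T) (t : nat) (t_pos : 0 < t) :
  let U : T -> nat := fun x => if x == u then t else 0 in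
  disjoint_dist P U ->
  forall v : T, cooperation_vertex e P U v ->
  exists w : T, e v w /\ has_coop_excess e P U w.
Proof.
move=> U _ v [[D [PUD Dv]] [unreachP unreachU]].
have PUv0 : dadd P U v = 0.
  by rewrite /dadd (unreachable_empty unreachP) (unreachable_empty unreachU).
have [w ewv PUw2] := reachable_from_empty PUv0 PUD Dv.
exists w; split; first by rewrite e_sym.
rewrite /has_coop_excess (exc_adj_unreachable e_irr ewv unreachP).
by rewrite (exc_adj_unreachable e_irr ewv unreachU) (exc_gt0 e_irr PUw2).
Qed.
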